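(* Let $k<n$ and let $X$ be any network constructor which, on a population of $n$ nodes, constructs a $k$-regular network (a spanning network in which every node has degree exactly $k$). Then, under the uniform random scheduler, the running time of $X$ is $\Omega(n)$ parallel time, i.e. $\Omega(n^2)$ interactions.
   Context: Network constructor model: there are $n$ nodes and every pair of nodes may interact. Each node has a state from a finite set $Q$; each of the $n(n-1)/2$ node pairs carries an edge state in $\{0,1\}$ (inactive/active), all initially $0$. At each discrete step the uniform random scheduler picks an unordered pair $\{u,v\}$ uniformly at random among all $n(n-1)/2$ pairs, independently of the past, and the two nodes and their edge are updated according to a transition function $\delta:Q\times Q\times\{0,1\}\to Q\times Q\times\{0,1\}$. The output graph of a configuration consists of the nodes in output states and the active edges between them. An execution constructs $G$ if its output graph is, from some step on, always isomorphic to $G$; the running time is the first such step, and parallel time is the number of steps divided by $n$. *)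

From HB Require Import structures.
From mathcomp Require Import all_boot all_order all_algebra.
From mathcomp Require Import all_classical all_reals all_analysis.
Set Implicit Arguments. Unset Strict Implicit. Unset Printing Implicit Defensive.
Import Order.TTheory GRing.Theory Num.Theory.
Local Open Scope classical_set_scope.
Local Open Scope ring_scope.

(* A network constructor: finite state set Q, common initial node state q0,
   output states, and transition function
   delta : Q x Q x {0,1} -> Q x Q x {0,1}. *)
Record protocol := Protocol {
  pstate : finType;
  pinit : pstate;
  pout : pred pstate;
  pdelta : pstate -> pstate -> bool -> pstate * pstate * bool }.

(* A configuration on n nodes: node states and (symmetric) edge states. *)
Definition config (X : protocol) (n : nat) : Type :=
  (('I_n -> pstate X) * ('I_n -> 'I_n -> bool))%type.

Definition init_config (X : protocol) (n : nat) : config X n :=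
  (fun _ => pinit X, fun _ _ => false).

(* One interaction of the (distinct) nodes u, v; the edge {u,v} is updated
   symmetrically.  An (impossible) self-interaction u = v changes nothing. *)
Definition step (X : protocol) (n : nat) (c : config X n) (uv : 'I_n * 'I_n)
  : config X n :=
  let u := uv.1 in let v := uv.2 in
  if u == v then c else
  let '(a, b, e) := @pdelta X (c.1 u) (c.1 v) (c.2 u v) in
  (fun x => if x == u then a else if x == v then b else c.1 x,
   fun x y => if ((x == u) && (y == v)) || ((x == v) && (y == u)) then e
              else c.2 x y).

Fixpoint exec (X : protocol) (n : nat) (sch : nat -> 'I_n * 'I_n) (t : nat)
  : config X n :=
  match t with
  | 0 => init_config X n
  | t'.+1 => step (exec X sch t') (sch t')
  end.

Definition output_iso (X : protocol) (n m : nat) (c : config X n)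
  (G : 'I_m -> 'I_m -> bool) : Prop :=
  exists f : 'I_m -> 'I_n,
    [/\ injective f,
        (forall x, @pout X (c.1 x) <-> exists i, f i = x) &
        (forall i j, G i j = c.2 (f i) (f j))].

Definition kregular (n k : nat) (G : 'I_n -> 'I_n -> bool) : Prop :=
  [/\ (forall i j, G i j = G j i), (forall i, G i i = false) &
      (forall i, #|[set j | G i j]| = k)].

Definition constructs_kreg_from (X : protocol) (n k : nat)
  (sch : nat -> 'I_n * 'I_n) (t : nat) : Prop :=
  exists G : 'I_n -> 'I_n -> bool,
    kregular k G /\ forall s, (t <= s)%N -> output_iso (exec X sch s) G.

(* Running time (number of interactions): the first such step; +oo if none. *)
Definition running_time (R : realType) (X : protocol) (n k : nat)
  (sch : nat -> 'I_n * 'I_n) : \bar R :=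
  ereal_inf [set (t%:R)%:E | t in [set t | constructs_kreg_from X k sch t]].

(* sched is an i.i.d. sequence of scheduler choices on the probability space:
   at each step an ordered pair (u,v) of distinct nodes is chosen uniformly
   among the n(n-1) of them, independently of the past (so the unordered pair
   {u,v} is uniform among the n(n-1)/2 pairs). *)
Definition uniform_scheduler (R : realType) (d : measure_display)
  (T : measurableType d) (P : probability T R) (n : nat)
  (sched : nat -> T -> 'I_n * 'I_n) : Prop :=
  (forall i (p : 'I_n * 'I_n), measurable (sched i @^-1` [set p])) /\
  forall (t : nat) (ps : nat -> 'I_n * 'I_n),
    P [set w | forall i, (i < t)%N -> sched i w = ps i] =
    (\prod_(i < t) (if (ps i).1 != (ps i).2
                    then ((n * (n - 1))%:R)^-1 else 0))%:E.

From HB Require Import structures.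
From mathcomp Require Import all_boot all_order all_algebra.
From mathcomp Require Import all_classical all_reals all_analysis.
From mathcomp Require Import lra zify measurable_realfun.
Import Order.TTheory GRing.Theory Num.Theory.
Local Open Scope classical_set_scope.
Local Open Scope ring_scope.

(* Call a configuration k-regular when every node has exactly k incident
   active edges.  The initial configuration is not k-regular, while a
   configuration whose output graph is a k-regular graph on all n nodes is.
   One interaction changes only the edge between its two endpoints, so when
   the execution becomes k-regular for the first time, the nodes of wrong
   degree just before were exactly the two interacting nodes: whatever the
   history, at most 2 of the n(n-1) equally likely ordered pairs complete
   the network.  A first hit at a given step thus has probability at most
   2/(n(n-1)), and a hit before step m probability at most 2m/(n(n-1)),
   which is at most 1/2 for m = n(n-1)/4.  Hence the running time is at
   least m with probability at least 1/2, and its expectation is at least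
   m/2 >= n^2/16 for n >= 4. *)

Section Degrees.
Local Set Implicit Arguments.
Local Unset Strict Implicit.
Variables (X : protocol) (n k : nat).
Local Notation cfg := (config X n).
Local Open Scope nat_scope.
Local Close Scope classical_set_scope.
Implicit Types (c : cfg) (u v x y : 'I_n).

Definition deg c x : nat := #|[set y | (y != x) && c.2 x y]|.

Definition deg_off c x y : nat := #|[set z | [&& z != x, z != y & c.2 x z]]|.

Definition kreg_config c : bool := [forall x, deg c x == k].

Definition edge_sym c : Prop := forall x y, c.2 x y = c.2 y x.

Definition same_pair u v x y : bool :=
  ((x == u) && (y == v)) || ((x == v) && (y == u)).

Lemma deg_split c x y : x != y -> deg c x = c.2 x y + deg_off c x y.
Proof.
move=> xy; rewrite /deg (cardsD1 y) inE eq_sym xy /=; congr (_ + _).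
by apply: eq_card => z; rewrite !inE; case: (z == y); rewrite ?andbF ?andbT.
Qed.

Lemma step_edge c u v x y : u != v ->
  (step c (u, v)).2 x y = if same_pair u v x y then (step c (u, v)).2 u v
                          else c.2 x y.
Proof.
by rewrite /step /= => /negbTE ->; case: pdelta => [[a b] e] /=; rewrite !eqxx.
Qed.

Lemma step_sym c p : edge_sym c -> edge_sym (step c p).
Proof.
move=> sc x y; rewrite /step; case: eqP => // _.
case: (pdelta _ _ _) => [[a b] e] /=.
by rewrite sc; case: (x == _); case: (y == _); case: (x == _); case: (y == _).
Qed.

Lemma exec_sym (sch : nat -> 'I_n * 'I_n) t : edge_sym (exec X sch t).
Proof. by elim: t => [|t IH] //=; exact: step_sym. Qed.

Lemma exec_prefix (sch sch' : nat -> 'I_n * 'I_n) t :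
  (forall i, i < t -> sch i = sch' i) -> exec X sch t = exec X sch' t.
Proof.
elim: t => [|t IH] eq_sch //=.
by rewrite IH ?eq_sch // => i /ltnW; exact: eq_sch.
Qed.

Lemma deg_step_other c u v x : u != v -> x != u -> x != v ->
  deg (step c (u, v)) x = deg c x.
Proof.
move=> uv xu xv; apply: eq_card => y; rewrite !inE step_edge //.
by rewrite /same_pair (negbTE xu) (negbTE xv).
Qed.

Lemma deg_off_step c u v x y : u != v -> same_pair u v x y ->
  deg_off (step c (u, v)) x y = deg_off c x y.
Proof.
move=> uv xy; apply: eq_card => z; rewrite !inE step_edge //.
case: (z =P x) => [//|/eqP zx]; case: (z =P y) => [//|/eqP zy] /=.
suff -> : same_pair u v x z = false by [].
by case/orP: xy => /andP [/eqP Ex /eqP Ey]; subst x y;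
  rewrite /same_pair (negbTE zx) (negbTE zy) !andbF.
Qed.

Lemma deg_step_endpoint c u v x y : u != v -> same_pair u v x y ->
  deg (step c (u, v)) x + c.2 x y = deg c x + (step c (u, v)).2 x y.
Proof.
move=> uv xy; have x_y : x != y.
  by case/orP: xy => /andP [/eqP -> /eqP ->]; rewrite // eq_sym.
by rewrite !(deg_split _ x_y) deg_off_step //; lia.
Qed.

Definition completing c : {set 'I_n * 'I_n} :=
  [set p | ~~ kreg_config c && kreg_config (step c p)].

(* A self-interaction changes nothing, so it never completes the network. *)
Lemma completing_neq c u v : (u, v) \in completing c -> u != v.
Proof.
rewrite inE => /andP [not_reg reg']; apply: contraNneq not_reg => uv.
by move: reg'; rewrite /step /= uv eqxx.
Qed.

Lemma completing_defect c u v : edge_sym c -> (u, v) \in completing c ->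
  forall x, (deg c x != k) = (x == u) || (x == v).
Proof.
move=> sc uv_in; have uv := completing_neq uv_in.
move: uv_in; rewrite inE => /andP [not_reg reg'].
set c' := step c (u, v) in reg' *.
have deg' x : deg c' x = k by apply/eqP; move/forallP: reg'.
have at_end x y : same_pair u v x y -> deg c x + c'.2 x y = k + c.2 x y.
  by move=> xy; rewrite -(deg' x) (deg_step_endpoint c uv xy).
have uvP : same_pair u v u v by rewrite /same_pair !eqxx.
have vuP : same_pair u v v u by rewrite /same_pair !eqxx orbT.
have sc' := step_sym (u, v) sc.
(* The interaction must flip the edge {u, v}, otherwise c was k-regular. *)
have flip : (c'.2 u v : nat) != c.2 u v.
  apply: contra not_reg => /eqP same; apply/forallP => x.
  case: (x =P u) => [->|/eqP xu].
    by rewrite -(eqn_add2r (c'.2 u v)) at_end // same.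
  case: (x =P v) => [->|/eqP xv].
    by rewrite -(eqn_add2r (c'.2 v u)) at_end // (sc v u) (sc' v u) same.
  by rewrite -(deg_step_other c uv xu xv) deg'.
have defect_end x y : same_pair u v x y -> deg c x != k.
  move=> xy; apply: contra flip => /eqP dx; move/eqP: (at_end _ _ xy).
  rewrite dx eqn_add2l.
  by case/orP: xy => /andP [/eqP -> /eqP ->] //; rewrite (sc v u) (sc' v u).
move=> x; case: (x =P u) => [->|/eqP xu]; first by rewrite (defect_end _ _ uvP).
case: (x =P v) => [->|/eqP xv]; first by rewrite (defect_end _ _ vuP) orbT.
by rewrite -(deg_step_other c uv xu xv) deg' eqxx.
Qed.

(* At most two (ordered) interactions complete the network: by
   [completing_defect] both endpoints of each are the nodes of wrong degree. *)
Lemma completing_card c : edge_sym c -> #|completing c| <= 2.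
Proof.
move=> sc; have [->|[[a b] ab_in]] := set_0Vmem (completing c).
  by rewrite cards0.
apply: (@leq_trans #|[set (a, b); (b, a)]|); last first.
  by rewrite cards2; case: (_ != _).
apply/subset_leq_card/fintype.subsetP => -[u v] uv_in.
have defect := completing_defect sc.
have /orP hu : (u == a) || (u == b).
  by rewrite -(defect _ _ ab_in) (defect _ _ uv_in) eqxx.
have /orP hv : (v == a) || (v == b).
  by rewrite -(defect _ _ ab_in) (defect _ _ uv_in) eqxx orbT.
have := completing_neq uv_in; rewrite !inE.
by case: hu => /eqP ->; case: hv => /eqP ->; rewrite ?eqxx ?orbT.
Qed.

Lemma kreg_of_iso c (G : 'I_n -> 'I_n -> bool) :
  kregular k G -> output_iso c G -> kreg_config c.
Proof.
case=> _ G_irr G_deg [f [f_inj _ f_edge]].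
have [g fg gf] := injF_bij f_inj.
apply/forallP => x; rewrite /deg -(gf x); set i := g x.
have -> : [set y | (y != f i) && c.2 (f i) y] = f @: [set j | G i j].
  apply/setP => y; rewrite -(gf y) inE (mem_imset _ _ f_inj) inE -f_edge.
  rewrite (inj_eq f_inj).
  by case: (g y =P i) => [->|]; rewrite ?G_irr.
rewrite card_imset // -(G_deg i); apply/eqP/eq_card => j.
by rewrite inE /in_mem /= /in_set asboolb.
Qed.

Lemma init_not_kreg : 0 < k -> 0 < n -> ~~ kreg_config (init_config X n).
Proof.
move=> k_gt0 n_gt0; apply/negP => /forallP /(_ (Ordinal n_gt0)).
rewrite /deg /= (_ : [set y | _ && false] = finset.set0) ?cards0.
  by move/eqP=> k0; rewrite -k0 in k_gt0.
by apply/setP => y; rewrite !inE andbF.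
Qed.

Lemma first_hit (sch : nat -> 'I_n * 'I_n) t :
  ~~ kreg_config (exec X sch 0) -> kreg_config (exec X sch t) ->
  exists2 s, s < t & sch s \in completing (exec X sch s).
Proof.
move=> not_reg0; elim: t => [|t IH] reg_t; first by rewrite reg_t in not_reg0.
have [reg|not_reg] := boolP (kreg_config (exec X sch t)).
  by have [s st hit] := IH reg; exists s => //; exact: ltnW.
by exists t => //; rewrite inE not_reg.
Qed.
End Degrees.
Section MeasureBounds.
Local Set Implicit Arguments.
Local Unset Strict Implicit.
Context d (T : measurableType d) (R : realType) (mu : {measure set T -> \bar R}).
Local Open Scope ereal_scope.

Lemma measure_bigsetU_le (I : Type) (r : seq I) (Pr : pred I) (F : I -> set T) :
  (forall i, measurable (F i)) ->
  mu (\big[setU/set0]_(i <- r | Pr i) F i) <= \sum_(i <- r | Pr i) mu (F i).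
Proof.
move=> mF; elim: r => [|i r IH]; first by rewrite !big_nil measure0.
rewrite !big_cons; case: ifP => // _.
apply: le_trans (measureU2 _ _ _) _ => //; last exact: leeD.
by apply: bigsetU_measurable => j _.
Qed.

Import HBNNSimple.

(* Lower bound on the integral of a nonnegative function that is at least a
   on a measurable set B; no measurability of f is needed, since the integral
   of f dominates that of every simple function below f. *)
Lemma integral_ge_on (f : T -> \bar R) (B : set T) (a : R) :
  measurable B -> (0 <= a)%R -> (forall x, 0 <= f x) ->
  (forall x, B x -> a%:E <= f x) -> a%:E * mu B <= \int[mu]_x f x.
Proof.
move=> mB a_ge0 f_ge0 f_ge_a.
pose h := scale_nnsfun (indic_nnsfun R mB) a_ge0.
have h_le x : (h x)%:E <= f x.
  rewrite /= mindicE; case: (boolP (x \in B)) => [/set_mem/f_ge_a|_].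
    by rewrite mulr1.
  by rewrite mulr0.
have -> : a%:E * mu B = \int[mu]_x (h x)%:E.
  rewrite (eq_integral (fun x => a%:E * (\1_B x)%:E)) //.
  rewrite ge0_integralZl_EFin //; last exact/measurable_EFinP/measurable_indic.
  by rewrite integral_indic // setIT.
rewrite integralT_nnsfun (ge0_integralTE _ f_ge0).
by apply: ereal_sup_ubound; exists h.
Qed.
End MeasureBounds.

Section FirstHit.
Local Set Implicit Arguments.
Local Unset Strict Implicit.
Context (R : realType) (d : measure_display) (T : measurableType d)
  (P : probability T R) (n : nat) (sched : nat -> T -> 'I_n * 'I_n).
Hypothesis sched_unif : uniform_scheduler P sched.
Variables (X : protocol) (k : nat).
(* A fixed pair used only to pad finite histories into schedules. *)
Variable p0 : 'I_n * 'I_n.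
Local Notation pair := ('I_n * 'I_n)%type.
Local Notation history s := {ffun 'I_s -> pair}.

Definition npairs : nat := n * (n - 1).

Definition pair_prob (p : pair) : R := if p.1 != p.2 then npairs%:R^-1 else 0.

Definition cylinder t (ps : nat -> pair) : set T :=
  [set w | forall i, (i < t)%N -> sched i w = ps i].

Definition extend s (h : history s) (p : pair) (i : nat) : pair :=
  oapp h p (insub i).

Lemma extend_lt s (h : history s) p i (i_lt : (i < s)%N) :
  extend h p i = h (Ordinal i_lt).
Proof. by rewrite /extend insubT. Qed.

Lemma extend_ge s (h : history s) p i : (s <= i)%N -> extend h p i = p.
Proof. by move=> s_le; rewrite /extend insubN // -leqNgt. Qed.

Lemma pair_prob_ge0 p : 0 <= pair_prob p.
Proof. by rewrite /pair_prob; case: ifP; rewrite ?invr_ge0. Qed.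

Lemma pair_prob_le p : pair_prob p <= npairs%:R^-1.
Proof. by rewrite /pair_prob; case: ifP; rewrite ?invr_ge0. Qed.

Lemma cylinder_measurable t ps : measurable (cylinder t ps).
Proof.
elim: t => [|t IH]; first by rewrite (_ : cylinder 0 ps = setT) //; apply/seteqP.
rewrite (_ : cylinder t.+1 ps = cylinder t ps `&` sched t @^-1` [set ps t]).
  by apply: measurableI => //; exact: sched_unif.1.
apply/seteqP; split => w /=.
  by move=> eq_ps; split => [i /ltnW|]; exact: eq_ps.
by move=> [eq_ps eq_t] i; rewrite ltnS leq_eqVlt => /orP [/eqP ->|/eq_ps].
Qed.

Lemma cylinder_extend_prob s (h : history s) p :
  P (cylinder s.+1 (extend h p)) =
  ((\prod_(i < s) pair_prob (h i)) * pair_prob p)%:E.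
Proof.
rewrite /cylinder sched_unif.2 big_ord_recr /= extend_ge //.
congr ((_ * _)%:E); apply: eq_bigr => i _.
by rewrite (extend_lt _ _ (ltn_ord i)); congr (pair_prob (h _)); exact: val_inj.
Qed.

Lemma sum_pair_prob : (1 < n)%N -> \sum_(p : pair) pair_prob p = 1.
Proof.
move=> n_gt1; rewrite -(pair_bigA _ (fun x y => pair_prob (x, y))) /=.
have row x : \sum_(y : 'I_n) pair_prob (x, y) = npairs%:R^-1 *+ n.-1.
  rewrite (bigID (fun y => x != y)) /= [X in _ + X]big1; last first.
    by move=> y /negPn; rewrite /pair_prob /= => ->.
  rewrite addr0 (eq_bigr (fun _ => npairs%:R^-1)); last first.
    by move=> y xy; rewrite /pair_prob /= xy.
  rewrite sumr_const; congr (_ *+ _).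
  rewrite -[in RHS](card_ord n) -(cardC1 x); apply: eq_card => y.
  by rewrite !inE eq_sym.
rewrite (eq_bigr _ (fun x _ => row x)) sumr_const card_ord -mulrnA.
have -> : (n.-1 * n = npairs)%N by rewrite /npairs mulnC subn1.
rewrite -[_ *+ npairs]mulr_natr mulVf //.
by rewrite pnatr_eq0 /npairs muln_eq0 negb_or; lia.
Qed.

Lemma sum_history_prob s : (1 < n)%N ->
  \sum_(h : history s) \prod_(i < s) pair_prob (h i) = 1.
Proof.
move=> n_gt1; rewrite -(bigA_distr_bigA (fun (_ : 'I_s) p => pair_prob p)) /=.
by rewrite sum_pair_prob // big1.
Qed.

(* The event that interaction number s is the first to make the execution
   k-regular: some history h of length s is followed by a completing pair. *)
Definition first_hit_at s : set T :=
  \big[setU/set0]_(h : history s)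
    \big[setU/set0]_(p in completing k (exec X (extend h p0) s))
      cylinder s.+1 (extend h p).

Lemma first_hit_at_measurable s : measurable (first_hit_at s).
Proof.
by apply: bigsetU_measurable => h _; apply: bigsetU_measurable => p _;
  exact: cylinder_measurable.
Qed.

(* Given any history, at most two of the n(n-1) equally likely pairs complete
   the network, so a first hit at step s has probability at most 2/(n(n-1)). *)
Lemma first_hit_at_prob s : (1 < n)%N ->
  (P (first_hit_at s) <= (2 / npairs%:R)%:E)%E.
Proof.
move=> n_gt1.
have per_history_measurable (h : history s) :
    measurable (\big[setU/set0]_(p in completing k (exec X (extend h p0) s))
                  cylinder s.+1 (extend h p)).
  by apply: bigsetU_measurable => p _; exact: cylinder_measurable.
apply: le_trans (measure_bigsetU_le P _ _ per_history_measurable) _.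
apply: (@le_trans _ _ (\sum_(h : history s)
    ((\prod_(i < s) pair_prob (h i)) * (2 / npairs%:R))%:E)%E); last first.
  by rewrite sumEFin lee_fin -mulr_suml sum_history_prob // mul1r.
apply: lee_sum => h _.
apply: le_trans (measure_bigsetU_le P _ _ (fun p => cylinder_measurable _ _)) _.
rewrite (eq_bigr (fun p => ((\prod_(i < s) pair_prob (h i)) * pair_prob p)%:E));
  last by move=> p _; exact: cylinder_extend_prob.
rewrite sumEFin lee_fin -mulr_sumr ler_wpM2l //.
  by apply: prodr_ge0 => i _; exact: pair_prob_ge0.
apply: le_trans (ler_sum _ (fun p _ => pair_prob_le p)) _.
rewrite sumr_const -[_ *+ #|_|]mulr_natl ler_wpM2r ?invr_ge0 // ler_nat.
exact/completing_card/exec_sym.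
Qed.

Definition hit_before m : set T := \big[setU/set0]_(s < m) first_hit_at s.

Lemma hit_before_measurable m : measurable (hit_before m).
Proof. by apply: bigsetU_measurable => s _; exact: first_hit_at_measurable. Qed.

Lemma hit_before_prob m : (1 < n)%N ->
  (P (hit_before m) <= (m%:R * (2 / npairs%:R))%:E)%E.
Proof.
move=> n_gt1.
have hit_meas (s : 'I_m) := first_hit_at_measurable s.
apply: le_trans (measure_bigsetU_le P _ _ hit_meas) _.
apply: (@le_trans _ _ (\sum_(s < m) (2 / npairs%:R)%:E)%E).
  by apply: lee_sum => s _; exact: first_hit_at_prob.
by rewrite sumEFin sumr_const card_ord -[_ *+ m]mulr_natl.
Qed.

Lemma constructs_hit_before m w t : (0 < k)%N ->
  constructs_kreg_from X k (sched^~ w) t -> (t < m)%N -> hit_before m w.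
Proof.
move=> k_gt0 [G [G_reg out_G]] t_lt_m.
have n_gt0 : (0 < n)%N := leq_ltn_trans (leq0n _) (ltn_ord p0.1).
have reg_t : kreg_config k (exec X (sched^~ w) t).
  exact: kreg_of_iso G_reg (out_G t _).
have [s s_lt_t hit] := first_hit (init_not_kreg X k_gt0 n_gt0) reg_t.
pose h := [ffun i : 'I_s => sched i w].
have exec_h : exec X (extend h p0) s = exec X (sched^~ w) s.
  by apply: exec_prefix => i i_lt; rewrite (extend_lt _ _ i_lt) ffunE.
rewrite /hit_before -bigcup_seq_cond; exists (Ordinal (ltn_trans s_lt_t t_lt_m)).
  by rewrite /= mem_index_enum.
rewrite /first_hit_at -bigcup_seq_cond; exists h.
  by rewrite /= mem_index_enum.
rewrite -bigcup_seq_cond; exists (sched s w).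
  by rewrite /= mem_index_enum exec_h.
move=> i; rewrite ltnS leq_eqVlt => /orP [/eqP ->|i_lt].
  by rewrite extend_ge.
by rewrite (extend_lt _ _ i_lt) ffunE.
Qed.

Lemma not_hit_before_prob m : (1 < n)%N -> (4 * m <= npairs)%N ->
  ((1 / 2)%:E <= P (~` hit_before m))%E.
Proof.
move=> n_gt1 m_le.
have npairs_gt0 : 0 < npairs%:R :> R by rewrite ltr0n /npairs muln_gt0; lia.
have m_bound : m%:R * (2 / npairs%:R) <= 1 / 2 :> R.
  rewrite mulrA ler_pdivrMr //; move: m_le; rewrite -(ler_nat R) natrM; lra.
have hit_meas := hit_before_measurable m.
rewrite probability_setC // leeBrDl ?fin_num_measure //.
apply: le_trans (leeD2r _ (hit_before_prob m n_gt1)) _.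
by rewrite -EFinD lee_fin; lra.
Qed.
End FirstHit.

Lemma running_time_ge (R : realType) (X : protocol) (n k : nat)
    (sch : nat -> 'I_n * 'I_n) (m : nat) :
  (forall t, constructs_kreg_from X k sch t -> (m <= t)%N) ->
  ((m%:R)%:E <= running_time R X k sch)%E.
Proof.
move=> m_le; apply: le_ereal_inf_tmp => _ [t /m_le m_le_t <-].
by rewrite lee_fin ler_nat.
Qed.

Lemma square_le_quarter_pairs n :
  (4 <= n)%N -> (n ^ 2 <= 8 * (n * (n - 1) %/ 4))%N.
Proof.
move=> n_ge4; have := divn_eq (n * (n - 1)) 4; have := ltn_mod (n * (n - 1)) 4.
have : (n ^ 2 + 6 <= 2 * (n * (n - 1)))%N by nia.
lia.
Qed.

Theorem theorem3 (R : realType) :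
  exists (c : R) (n0 : nat), 0 < c /\
  forall (n k : nat) (X : protocol), (n0 <= n)%N -> (1 <= k < n)%N ->
  forall (d : measure_display) (T : measurableType d) (P : probability T R)
         (sched : nat -> T -> 'I_n * 'I_n),
    uniform_scheduler P sched ->
    {ae P, forall w, exists t, constructs_kreg_from X k (sched ^~ w) t} ->
    ((c * (n%:R) ^+ 2)%:E <= \int[P]_w running_time R X k (sched ^~ w))%E.
Proof.
exists (1 / 16), 4%N; split => // n k X n_ge4 /andP [k_gt0 _] d T P sched unif _.
have n_gt1 : (1 < n)%N by lia.
pose p0 := (Ordinal (ltnW n_gt1), Ordinal (ltnW n_gt1)).
pose m := (npairs n %/ 4)%N.
pose early := hit_before sched X k p0 m.
have late_prob : ((1 / 2)%:E <= P (~` early))%E.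
  by apply: not_hit_before_prob => //; rewrite mulnC leq_divM.
have late_time w :
    (~` early) w -> ((m%:R)%:E <= running_time R X k (sched ^~ w))%E.
  move=> late; apply: running_time_ge => t built; rewrite leqNgt.
  apply/negP => t_lt_m.
  exact/late/(constructs_hit_before p0 k_gt0 built t_lt_m).
have rt_ge0 w : (0 <= running_time R X k (sched ^~ w))%E.
  exact: (@running_time_ge _ _ _ _ _ 0 (fun t _ => leq0n t)).
have early_meas : measurable early := hit_before_measurable unif X k p0 m.
apply: le_trans
  (integral_ge_on P (measurableC early_meas) (ler0n _ m) rt_ge0 late_time).
have half_m : ((m%:R)%:E * (1 / 2)%:E <= (m%:R)%:E * P (~` early))%E.
  by apply: lee_wpmul2l => //; rewrite lee_fin.
apply: le_trans half_m; rewrite -EFinM lee_fin.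
move: (square_le_quarter_pairs _ n_ge4).
by rewrite -(ler_nat R) natrX natrM => n2_le; lra.
Qed.
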